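(* Let $G$ be a simple graph with vertex set $V$, $\mu$ a positive integer, and $\mathcal K$ a clique partition of $\mu G$. Let $V^*$ be the set of $\mathcal K$-essential vertices, $G^*=G[V^*]$ the induced subgraph, and $\mathcal K^*$ the multiset of nonempty restrictions $K[V^*]$ of cliques $K\in\mathcal K$ to $V^*$ (which, when $V^*\neq\emptyset$, is a clique partition of $\mu G^*$). Then $$\lambda(G)=-\frac{r(\mathcal K)}{\mu}\quad\text{if and only if}\quad V^*\ne\emptyset\ \text{and}\ \lambda(G^* )=-\frac{r(\mathcal K^* )}{\mu}.$$ Moreover, if $\lambda(G)=-r(\mathcal K)/\mu$, then $\lambda(G)=\lambda(G^* )$ and $r_u(\mathcal K^* )=r(\mathcal K)$ for all $u\in V^*$.
   Context: $\lambda(\cdot)$ is the smallest adjacency eigenvalue. A clique of $G$ is a complete subgraph on at least two vertices. A clique partition of $\mu G$ ($\mu$ a positive integer) is a finite multiset $\mathcal K$ of cliques of $G$ such that every edge of $G$ lies in exactly $\mu$ members of $\mathcal K$ (with multiplicity); $r_u(\mathcal K)$ is the number of members containing vertex $u$ and $r(\mathcal K)=\max_u r_u(\mathcal K)$. The $\mathcal K$-essential vertices are defined as follows: let $V^1=\{u\in V: r_u(\mathcal K)=r(\mathcal K)\}$, and for $i\ge1$ let $V^{i+1}=V^i\setminus\{v: V(K)\cap V^i=\{v\}\text{ for some }K\in\mathcal K\}$; the sequence stabilizes at a set $V^*$ (possibly empty), whose elements are the $\mathcal K$-essential vertices. Every clique of $\mathcal K$ is then either disjoint from $V^*$ or meets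 it in at least two vertices. *)

From HB Require Import structures.
From mathcomp Require Import all_boot all_order all_algebra.
Set Implicit Arguments. Unset Strict Implicit. Unset Printing Implicit Defensive.
Import Order.TTheory GRing.Theory Num.Theory.

(* A simple graph on vertex type T: a symmetric irreflexive relation e. *)

(* Adjacency matrix of the induced subgraph G[S], indexed by 'I_#|S|
   through enum_val (G itself is G[setT]). *)
Definition adj (R : rcfType) (T : finType) (e : rel T) (S : {set T})
  : 'M[R]_#|S| :=
  (\matrix_(i, j) (e (enum_val i) (enum_val j))%:R)%R.

Definition is_lambda (R : rcfType) (n : nat) (A : 'M[R]_n) (x : R) : Prop :=
  eigenvalue A x /\ (forall y, eigenvalue A y -> (x <= y)%R).

Definition is_clique (T : finType) (e : rel T) (K : {set T}) : Prop :=
  1 < #|K| /\ (forall u v, u \in K -> v \in K -> u != v -> e u v).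

(* Clique partition of mu G: a multiset (seq) of cliques such that every edge
   lies in exactly mu members (counted with multiplicity). *)
Definition clique_partition (T : finType) (e : rel T) (mu : nat)
  (Ks : seq {set T}) : Prop :=
  (forall K, K \in Ks -> is_clique e K) /\
  (forall u v, e u v -> count (fun K : {set T} => (u \in K) && (v \in K)) Ks = mu).

Definition r_at (T : finType) (Ks : seq {set T}) (u : T) : nat :=
  count (fun K : {set T} => u \in K) Ks.

(* r(K), maximum over the vertex set S of the graph the partition refers to *)
Definition r_max (T : finType) (Ks : seq {set T}) (S : {set T}) : nat :=
  \max_(u in S) r_at Ks u.

Definition V1 (T : finType) (Ks : seq {set T}) : {set T} :=
  [set u | r_at Ks u == r_max Ks setT].

Definition ess_step (T : finType) (Ks : seq {set T}) (W : {set T}) : {set T} :=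
  W :\: [set v | has (fun K : {set T} => K :&: W == [set v]) Ks].

(* The sequence V^i is decreasing in a finite set, hence stable after at most
   #|T| steps; V^* is its stable value. *)
Definition essential (T : finType) (Ks : seq {set T}) : {set T} :=
  iter #|T| (ess_step Ks) (V1 Ks).

Definition restrict (T : finType) (Ks : seq {set T}) (S : {set T})
  : seq {set T} :=
  [seq K :&: S | K <- Ks & K :&: S != set0].

From HB Require Import structures.
From mathcomp Require Import all_boot all_order all_algebra.
From mathcomp.algebra_tactics Require Import ring.
Import Order.TTheory GRing.Theory Num.Theory.
Set Implicit Arguments. Unset Strict Implicit. Unset Printing Implicit Defensive.
Local Open Scope ring_scope.

(* Let N be the vertex-clique incidence matrix of the partition and D the diagonal
   matrix of the r_u, so that mu A + D = N N^T.  For every f : V -> R,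
     mu <f, A f> + r |f|^2 = |N^T f|^2 + sum_u (r - r_u) f_u^2 >= 0,
   so every eigenvalue of every induced subgraph is at least -r/mu, and an
   eigenvector for -r/mu has zero sum on every clique and is supported where
   r_u = r, i.e. in V^1.  A clique meeting the support in a single vertex would
   force f to vanish there, so the support stays inside every V^i, hence inside
   V^*.  Conversely, an eigenvector of G^* for -r/mu extended by zero has zero
   clique sums by the same identity, and since r_u = r on V^* the relation
   mu A + D = N N^T shows that it is an eigenvector of G. *)

Section AdjacencyEigenvalues.
Variables (R : rcfType) (T : finType) (e : rel T).

Definition adj_apply (f : T -> R) (v : T) : R := \sum_u f u * (e u v)%:R.

Definition is_eigenfun (S : {set T}) (a : R) (f : T -> R) : Prop :=
  [/\ exists t, f t != 0, forall t, t \notin S -> f t = 0 &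
      forall v, v \in S -> adj_apply f v = a * f v].

Definition extend_row (S : {set T}) (x : 'rV[R]_#|S|) (t : T) : R :=
  \sum_(i | enum_val i == t) x 0 i.

Lemma extend_row_enum (S : {set T}) (x : 'rV[R]_#|S|) i :
  extend_row x (enum_val i) = x 0 i.
Proof. by rewrite /extend_row (big_pred1 i) // => j; rewrite /= (inj_eq enum_val_inj). Qed.

Lemma extend_row_out (S : {set T}) (x : 'rV[R]_#|S|) t :
  t \notin S -> extend_row x t = 0.
Proof.
move=> tS; rewrite /extend_row big_pred0 // => i.
by apply: contraNF tS => /eqP <-; apply: enum_valP.
Qed.

Lemma mul_row_adj (S : {set T}) (x : 'rV[R]_#|S|) j :
  (x *m adj R e S) 0 j = adj_apply (extend_row x) (enum_val j).
Proof.
rewrite mxE /adj_apply (partition_big enum_val predT) //=.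
apply: eq_bigr => t _; rewrite /extend_row mulr_suml.
by apply: eq_bigr => i /eqP <-; rewrite mxE.
Qed.

Lemma eigenvalue_adjP (S : {set T}) (a : R) :
  eigenvalue (adj R e S) a <-> exists f, is_eigenfun S a f.
Proof.
split=> [/eigenvalueP [x xA x_neq0] | [f [[t ft] f_out fA]]].
  exists (extend_row x); split.
  - have [i xi] : exists i, x 0 i != 0.
      apply/existsP; apply: contraR x_neq0 => /existsPn x0.
      by apply/eqP/rowP => i; rewrite mxE; apply/eqP/negPn.
    by exists (enum_val i); rewrite extend_row_enum.
  - by move=> t; apply: extend_row_out.
  - by move=> v vS; rewrite -(enum_rankK_in vS vS) -mul_row_adj xA mxE extend_row_enum.
have tS : t \in S by apply: contraR ft => /f_out ->.
pose x := \row_i f (enum_val i) : 'rV[R]_#|S|.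
have xf : extend_row x =1 f.
  move=> u; have [uS|uS] := boolP (u \in S); last by rewrite extend_row_out ?f_out.
  by rewrite -(enum_rankK_in uS uS) extend_row_enum mxE.
apply/eigenvalueP; exists x.
  apply/rowP => j; rewrite mul_row_adj /adj_apply; under eq_bigr do rewrite xf.
  by rewrite -/(adj_apply f _) fA ?enum_valP // !mxE.
apply: contraNneq ft => /rowP/(_ (enum_rank_in tS t)).
by rewrite !mxE enum_rankK_in // => ->.
Qed.

Lemma eigenfun_dot (S : {set T}) (a : R) (f : T -> R) :
  is_eigenfun S a f -> \sum_v f v * adj_apply f v = a * \sum_v f v ^+ 2.
Proof.
move=> [_ f_out fA]; rewrite mulr_sumr; apply: eq_bigr => v _.
by have [/fA->|/f_out->] := boolP (v \in S); rewrite ?mul0r; ring.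
Qed.

Lemma sum_sqr_gt0 (f : T -> R) t : f t != 0 -> 0 < \sum_v f v ^+ 2.
Proof.
move=> ft; rewrite (bigD1 t) //= ltr_wpDr ?sumr_ge0 // => [v _|]; first exact: sqr_ge0.
by rewrite lt0r sqrf_eq0 ft sqr_ge0.
Qed.

Lemma eigenvalue_adj_neq0 (S : {set T}) (a : R) : eigenvalue (adj R e S) a -> S != set0.
Proof.
move=> /eigenvalue_adjP [f [[t ft] f_out _]].
by apply/set0Pn; exists t; apply: contraR ft => /f_out ->.
Qed.

End AdjacencyEigenvalues.

Definition clique_sum (R : rcfType) (T : finType) (K : {set T}) (f : T -> R) : R :=
  \sum_(u in K) f u.

Lemma r_at_le_max (T : finType) (Ks : seq {set T}) u : (r_at Ks u <= r_max Ks setT)%N.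
Proof. exact: leq_bigmax_cond. Qed.

Lemma r_deficit_ge0 (R : rcfType) (T : finType) (Ks : seq {set T}) (f : T -> R) v :
  0 <= ((r_max Ks setT)%:R - (r_at Ks v)%:R) * f v ^+ 2.
Proof. by rewrite mulr_ge0 ?sqr_ge0 // subr_ge0 ler_nat r_at_le_max. Qed.

Lemma ess_step_support (R : rcfType) (T : finType) (Ks : seq {set T}) (f : T -> R)
    (W : {set T}) :
  (forall K, K \in Ks -> clique_sum K f = 0) -> (forall v, f v != 0 -> v \in W) ->
  forall v, f v != 0 -> v \in ess_step Ks W.
Proof.
move=> cs0 fW v fv; rewrite !inE fW // andbT; apply/hasP => -[K KKs /eqP KW].
have vK : v \in K by have := set11 v; rewrite -KW inE => /andP[].
move/eqP: (cs0 K KKs); apply/negP; rewrite /clique_sum (bigD1 v) //= big1 ?addr0 //.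
move=> u /andP[uK uv]; have [//|fu] := eqVneq (f u) 0.
have : u \in K :&: W by rewrite inE uK fW.
by rewrite KW inE (negbTE uv).
Qed.

Lemma essential_support (R : rcfType) (T : finType) (Ks : seq {set T}) (f : T -> R) :
  (forall K, K \in Ks -> clique_sum K f = 0) -> (forall v, f v != 0 -> v \in V1 Ks) ->
  forall v, f v != 0 -> v \in essential Ks.
Proof. by move=> cs0 fV1; rewrite /essential; elim: #|T| => //= n; apply: ess_step_support. Qed.

Lemma essential_subset_V1 (T : finType) (Ks : seq {set T}) : essential Ks \subset V1 Ks.
Proof.
rewrite /essential; elim: #|T| => //= n IH.
by apply: subset_trans IH; apply: subsetDl.
Qed.

Lemma r_at_essential (T : finType) (Ks : seq {set T}) u :
  u \in essential Ks -> r_at Ks u = r_max Ks setT.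
Proof. by move/(subsetP (essential_subset_V1 Ks)); rewrite inE => /eqP. Qed.

Lemma r_at_restrict (T : finType) (Ks : seq {set T}) (S : {set T}) u :
  u \in S -> r_at (restrict Ks S) u = r_at Ks u.
Proof.
move=> uS; rewrite /r_at /restrict count_map count_filter; apply: eq_count => K /=.
rewrite inE uS andbT; case uK: (u \in K) => //=.
by apply/set0Pn; exists u; rewrite inE uK uS.
Qed.

Lemma r_max_restrict_essential (T : finType) (Ks : seq {set T}) :
  essential Ks != set0 -> r_max (restrict Ks (essential Ks)) (essential Ks) = r_max Ks setT.
Proof.
have r_ess u : u \in essential Ks -> r_at (restrict Ks (essential Ks)) u = r_max Ks setT.
  by move=> uV; rewrite r_at_restrict ?r_at_essential.
move=> /set0Pn [u uV]; apply/eqP; rewrite eqn_leq; apply/andP; split.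
  by apply/bigmax_leqP => w wV; rewrite r_ess.
by rewrite -(r_ess u uV) (leq_bigmax_cond _ uV).
Qed.

Section CliquePartition.
Variables (R : rcfType) (T : finType) (e : rel T) (mu : nat) (Ks : seq {set T}).
Hypotheses (e_irr : irreflexive e) (Ks_part : clique_partition e mu Ks).

Local Notation r := (r_max Ks setT).

Lemma count_common_cliques u v :
  (count (fun K : {set T} => (u \in K) && (v \in K)) Ks =
     (u == v) * r_at Ks u + mu * e u v)%N.
Proof.
have [<-|uv] := eqVneq u v.
  by rewrite e_irr muln0 addn0 mul1n; apply: eq_count => K; rewrite andbb.
have [Ks_clique Ks_edge] := Ks_part.
case euv: (e u v); first by rewrite Ks_edge // muln1.
apply/eqP; rewrite muln0 -leqn0 leqNgt -has_count; apply/hasP => -[K KKs /andP[uK vK]].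
by have := (Ks_clique K KKs).2 u v uK vK uv; rewrite euv.
Qed.

Lemma adj_apply_partition (f : T -> R) v :
  mu%:R * adj_apply e f v + (r_at Ks v)%:R * f v = \sum_(K <- Ks | v \in K) clique_sum K f.
Proof.
rewrite /clique_sum (exchange_big_dep predT) //=.
transitivity (\sum_u f u * (count (fun K : {set T} => (u \in K) && (v \in K)) Ks)%:R).
  rewrite (bigD1 v) //= count_common_cliques /adj_apply (bigD1 v) //= e_irr eqxx.
  rewrite mulr0 add0r mulr_sumr mul1n muln0 addn0 addrC (mulrC (f v)); congr (_ + _).
  apply: eq_bigr => u uv; rewrite count_common_cliques (negbTE uv) mul0n add0n natrM; ring.
apply: eq_bigr => u _; rewrite -sum1_count natr_sum mulr_sumr.
by apply: eq_big => [K | K _]; rewrite 1?andbC ?mulr1.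
Qed.

Lemma partition_quad_form (f : T -> R) :
  mu%:R * \sum_v f v * adj_apply e f v + r%:R * \sum_v f v ^+ 2 =
  \sum_(K <- Ks) clique_sum K f ^+ 2 + \sum_v (r%:R - (r_at Ks v)%:R) * f v ^+ 2.
Proof.
have -> : \sum_(K <- Ks) clique_sum K f ^+ 2 =
          \sum_v f v * (mu%:R * adj_apply e f v + (r_at Ks v)%:R * f v).
  under [RHS]eq_bigr do rewrite adj_apply_partition mulr_sumr.
  rewrite (exchange_big_dep predT) //=; apply: eq_bigr => K _.
  by rewrite expr2 /clique_sum mulr_suml.
rewrite !mulr_sumr -!big_split /=; apply: eq_bigr => v _; ring.
Qed.

Lemma partition_quad_form_ge0 (f : T -> R) :
  0 <= mu%:R * \sum_v f v * adj_apply e f v + r%:R * \sum_v f v ^+ 2.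
Proof.
rewrite partition_quad_form addr_ge0 ?sumr_ge0 // => [K _|v _]; first exact: sqr_ge0.
exact: r_deficit_ge0.
Qed.

Lemma partition_quad_form_eq0 (f : T -> R) :
  mu%:R * \sum_v f v * adj_apply e f v + r%:R * \sum_v f v ^+ 2 = 0 ->
  (forall K, K \in Ks -> clique_sum K f = 0) /\ (forall v, f v != 0 -> r_at Ks v = r).
Proof.
rewrite partition_quad_form => /eqP.
rewrite paddr_eq0 ?sumr_ge0 // => [|K _|v _]; [ | exact: sqr_ge0 | exact: r_deficit_ge0].
move=> /andP[/eqP cs0 /eqP def0]; split=> [K KKs | v fv].
  move/eqP: cs0; rewrite psumr_eq0 => [/allP/(_ K KKs)|K' _]; last exact: sqr_ge0.
  by rewrite sqrf_eq0 => /eqP.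
have /eqP := psumr_eq0P (fun v _ => r_deficit_ge0 Ks f v) def0 (i := v) isT.
by rewrite mulf_eq0 sqrf_eq0 (negbTE fv) orbF subr_eq0 eqr_nat => /eqP.
Qed.

Hypothesis mu_gt0 : (0 < mu)%N.

Local Notation lambda_min := (- (r%:R / mu%:R) : R).

Let mu_neq0 : mu%:R != 0 :> R.
Proof. by rewrite pnatr_eq0 -lt0n. Qed.

Lemma eigenfun_quad_form (S : {set T}) (a : R) (f : T -> R) : is_eigenfun e S a f ->
  mu%:R * \sum_v f v * adj_apply e f v + r%:R * \sum_v f v ^+ 2 =
  (mu%:R * a + r%:R) * \sum_v f v ^+ 2.
Proof. by move/eigenfun_dot->; ring. Qed.

Lemma eigenvalue_adj_ge (S : {set T}) (a : R) : eigenvalue (adj R e S) a -> lambda_min <= a.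
Proof.
move=> /eigenvalue_adjP [f f_eig]; have [[t ft] _ _] := f_eig.
have := partition_quad_form_ge0 f; rewrite (eigenfun_quad_form f_eig).
rewrite pmulr_lge0 ?(sum_sqr_gt0 ft) // => ge0.
rewrite -subr_ge0 opprK (_ : a + _ = (mu%:R * a + r%:R) / mu%:R); last by field.
by rewrite divr_ge0 ?ler0n.
Qed.

Lemma min_eigenfun_tight (S : {set T}) (f : T -> R) : is_eigenfun e S lambda_min f ->
  (forall K, K \in Ks -> clique_sum K f = 0) /\ (forall v, f v != 0 -> r_at Ks v = r).
Proof.
move=> f_eig; apply: partition_quad_form_eq0.
by rewrite (eigenfun_quad_form f_eig) (_ : _ + _ = 0) ?mul0r //; field.
Qed.

Lemma min_eigenfun_essential (f : T -> R) :
  is_eigenfun e setT lambda_min f -> is_eigenfun e (essential Ks) lambda_min f.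
Proof.
move=> f_eig; have [cs0 r_supp] := min_eigenfun_tight f_eig.
have f_ess : forall v, f v != 0 -> v \in essential Ks.
  by apply: essential_support => // v /r_supp r_v; rewrite inE r_v.
have [[t ft] _ fA] := f_eig; split; first by exists t.
  by move=> v; apply: contraNeq => /f_ess.
by move=> v _; apply: fA; rewrite inE.
Qed.

Lemma min_eigenfun_lift (f : T -> R) :
  is_eigenfun e (essential Ks) lambda_min f -> is_eigenfun e setT lambda_min f.
Proof.
move=> f_eig; have [cs0 _] := min_eigenfun_tight f_eig.
have [[t ft] f_out _] := f_eig; split=> [|v|v _]; first by exists t.
  by rewrite inE.
have r_f : (r_at Ks v)%:R * f v = r%:R * f v.
  have [->|fv] := eqVneq (f v) 0; first by rewrite !mulr0.
  by rewrite r_at_essential //; apply: contraNT fv => /f_out ->.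
have := adj_apply_partition f v; rewrite big_seq_cond big1 => [|K /andP[KKs _]]; last first.
  exact: cs0.
rewrite r_f => /eqP; rewrite addr_eq0 => /eqP muA.
by rewrite -[adj_apply e f v](mulKf mu_neq0) muA; field.
Qed.

Lemma eigenvalue_min_essential :
  eigenvalue (adj R e setT) lambda_min <-> eigenvalue (adj R e (essential Ks)) lambda_min.
Proof.
rewrite !eigenvalue_adjP; split=> -[f f_eig]; exists f.
  exact: min_eigenfun_essential.
exact: min_eigenfun_lift.
Qed.

Lemma is_lambda_min (S : {set T}) :
  eigenvalue (adj R e S) lambda_min -> is_lambda (adj R e S) lambda_min.
Proof. by split=> // y; apply: eigenvalue_adj_ge. Qed.

End CliquePartition.

Lemma is_lambda_uniq (R : rcfType) n (A : 'M[R]_n) x y :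
  is_lambda A x -> is_lambda A y -> x = y.
Proof. by move=> [ex lx] [ey ly]; apply: le_anti; rewrite lx // ly. Qed.

Theorem mainTheorem4 (R : rcfType) (T : finType) (e : rel T) (mu : nat)
    (Ks : seq {set T}) :
  symmetric e -> irreflexive e -> (0 < mu)%N -> clique_partition e mu Ks ->
  let Vs := essential Ks in
  let Ks' := restrict Ks Vs in
  (is_lambda (adj R e setT) (- ((r_max Ks setT)%:R / mu%:R)) <->
     (Vs != set0 /\ is_lambda (adj R e Vs) (- ((r_max Ks' Vs)%:R / mu%:R))))
  /\
  (is_lambda (adj R e setT) (- ((r_max Ks setT)%:R / mu%:R)) ->
     (forall x, is_lambda (adj R e setT) x <-> is_lambda (adj R e Vs) x) /\
     (forall u, u \in Vs -> r_at Ks' u = r_max Ks setT)).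
Proof.
move=> _ e_irr mu_gt0 Ks_part Vs Ks'.
have ess := eigenvalue_min_essential R e_irr Ks_part mu_gt0.
have lambda_min_ess : is_lambda (adj R e setT) (- ((r_max Ks setT)%:R / mu%:R)) ->
    Vs != set0 /\ is_lambda (adj R e Vs) (- ((r_max Ks setT)%:R / mu%:R)).
  move=> [/ess evV _]; split; first exact: eigenvalue_adj_neq0 evV.
  exact: is_lambda_min.
split; first split.
- move=> /lambda_min_ess [nzV lamV]; split=> //.
  by rewrite r_max_restrict_essential.
- move=> [nzV]; rewrite r_max_restrict_essential // => -[/ess evG _].
  exact: is_lambda_min.
move=> lamG; have [_ lamV] := lambda_min_ess lamG; split.
  move=> x; split=> lamx.
    by rewrite (is_lambda_uniq lamx lamG).
  by rewrite (is_lambda_uniq lamx lamV).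
by move=> u uV; rewrite r_at_restrict ?r_at_essential.
Qed.
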